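(* Let $Z$ be an absolutely continuous real random variable with cdf $F$, let $(z_n)_{n\ge1}$ be a real sequence with $z_n\to z$, and let $\beta\in(0,1]$. Then $LD_S^\beta(z_n,F)\to LD_S^\beta(z,F)$ as $n\to\infty$.
   Context: $\lambda_z^\beta=\inf\{\lambda>0: F(z+\lambda)-F(z-\lambda)\ge\beta\}$ and $LD_S^\beta(z,F)=\frac{2}{\beta^2}\big(F(z+\lambda_z^\beta)-F(z)\big)\big(F(z)-F(z-\lambda_z^\beta)\big)$. *)

From HB Require Import structures.
From mathcomp Require Import all_boot all_order all_algebra.
From mathcomp Require Import all_classical all_reals all_analysis.
Set Implicit Arguments. Unset Strict Implicit. Unset Printing Implicit Defensive.
Import Order.TTheory GRing.Theory Num.Theory.
Import numFieldNormedType.Exports.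
Local Open Scope classical_set_scope.
Local Open Scope ring_scope.

Definition cdfR d (T : measurableType d) (R : realType) (P : probability T R)
  (Z : {RV P >-> R}) (r : R) : R := fine (cdf Z r).

(* Extension of a cdf to the extended reals: F(+oo) = 1, F(-oo) = 0
   (the limits of any cdf). *)
Definition Fbar (R : realType) (F : R -> R) (x : \bar R) : R :=
  match x with
  | r%:E => F r
  | +oo%E => 1
  | -oo%E => 0
  end.

(* lambda_z^beta = inf { lambda > 0 : F(z+lambda) - F(z-lambda) >= beta },
   computed in the extended reals (= +oo when the set is empty). *)
Definition lambdaS (R : realType) (beta : R) (z : R) (F : R -> R) : \bar R :=
  ereal_inf [set l%:E | l in [set l : R | 0 < l /\ beta <= F (z + l) - F (z - l)]].

Definition LD_S (R : realType) (beta : R) (z : R) (F : R -> R) : R :=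
  let l := lambdaS beta z F in
  2 / beta ^+ 2 * (Fbar F (z%:E + l)%E - F z) * (F z - Fbar F (z%:E - l)%E).

(* Absolute continuity rules out atoms, so F is continuous; hence for fixed z the
   gap g(l) = F(z+l) - F(z-l) is continuous, nondecreasing, g(0) = 0 and g -> 1 at
   +oo.  The infimum lambda_z is therefore attained, g(lambda_z) = beta (finite when
   beta < 1), and LD_S^beta(z,F) = 2/beta^2 (A z - F z)(F z - A z + beta) with
   A z = F(z + lambda_z).  For beta = 1, A = 1.  For beta < 1, lambda_z need not be
   continuous in z but A is: if A y > A z then z + lambda_z < y + lambda_y and
   z - lambda_z < y - lambda_y, which forces
   0 < (y + lambda_y) - (z + lambda_z) < 2 (y - z),
   so continuity of F at z + lambda_z transfers to A at z. *)

From HB Require Import structures.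
From mathcomp Require Import all_boot all_order all_algebra.
From mathcomp Require Import all_classical all_reals all_analysis.
From mathcomp Require Import lra.
Import Order.TTheory GRing.Theory Num.Theory.
Import numFieldNormedType.Exports.
Local Open Scope classical_set_scope.
Local Open Scope ring_scope.

Section cdfR.
Context {R : realType} {d : measure_display} {T : measurableType d}
  {P : probability T R}.
Variable Z : {RV P >-> R}.

Lemma cdfRE x : (cdfR Z x)%:E = cdf Z x.
Proof. by rewrite /cdfR fineK// fin_num_measure. Qed.

Lemma cdfR_ge0 x : 0 <= cdfR Z x.
Proof. exact: fine_ge0. Qed.

Lemma cdfR_le1 x : cdfR Z x <= 1.
Proof. by rewrite -lee_fin cdfRE cdf_le1. Qed.

Lemma cdfR_nondecreasing : nondecreasing_fun (cdfR Z).
Proof. by move=> x y xy; rewrite -lee_fin !cdfRE cdf_nondecreasing. Qed.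

Lemma cvg_cdfR_y1 : cdfR Z x @[x --> +oo] --> (1 : R).
Proof. exact: fine_cvg (cvg_cdfy1 Z). Qed.

Lemma cvg_cdfR_Ny0 : cdfR Z x @[x --> -oo] --> (0 : R).
Proof. exact: fine_cvg (cvg_cdfNy0 Z). Qed.

Lemma cdfR_right_continuous : right_continuous (cdfR Z).
Proof.
by move=> a; have := @cdf_right_continuous _ _ _ _ Z a; rewrite -cdfRE => /fine_cvg.
Qed.

Hypothesis Zac : distribution P Z `<< (@lebesgue_measure R).

Lemma cdf_itvNyo a : distribution P Z `]-oo, a[ = cdf Z a.
Proof.
rewrite /cdf -(@setUitv1 _ _ _ _ true) ?bnd_simp//.
apply/esym/(null_setU _ _).1 => //; apply: Zac; apply/measure0_null_setP => //.
exact: lebesgue_measure_set1.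
Qed.

Lemma cvg_cdfR_left a : cdfR Z (a - n.+1%:R^-1) @[n --> \oo] --> cdfR Z a.
Proof.
apply: (@fine_cvg _ _ _ _ (fun n => cdf Z (a - n.+1%:R^-1))).
rewrite cdfRE -cdf_itvNyo.
have -> : `]-oo, a[%classic = \bigcup_n `]-oo, a - n.+1%:R^-1]%classic.
  apply/seteqP; split => [r|r [n _]] /=; rewrite !in_itv /=.
  - by move=> /ltr_add_invr[n rn]; exists n => //=; rewrite in_itv/= lerBrDr ltW.
  - by move=> /le_lt_trans; apply; rewrite ltrBlDr ltrDl.
apply: nondecreasing_cvg_mu => //; first exact: bigcup_measurable.
move=> m n mn; apply/subsetPset => x /=; rewrite !in_itv /= => /le_trans; apply.
by rewrite lerB// lef_pV2 ?posrE// ler_nat.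
Qed.

Lemma cdfR_left_continuous a : cdfR Z x @[x --> a^'-] --> cdfR Z a.
Proof.
apply/cvgrPdist_lt => e e0.
have /cvgrPdist_lt/(_ e e0)[N _ hN] := cvg_cdfR_left a.
near=> x.
have xa : x < a by near: x; exact: nbhs_left_lt.
have Nx : a - N.+1%:R^-1 < x by near: x; apply: nbhs_left_gt; rewrite ltrBlDr ltrDl.
have := cdfR_nondecreasing _ _ (ltW xa).
have := cdfR_nondecreasing _ _ (ltW Nx).
have := hN N (leqnn N); rewrite /= !ltr_norml => /andP[? ?] ? ?.
apply/andP; split; lra.
Unshelve. all: by end_near. Qed.

Lemma cdfR_continuous : continuous (cdfR Z).
Proof.
by move=> a; apply/left_right_continuousP; split;
  [exact: cdfR_left_continuous | exact: cdfR_right_continuous].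
Qed.
End cdfR.

Section lambdaS.
Context {R : realType}.
Variables (F : R -> R) (beta : R).
Hypotheses (F_ge0 : forall x, 0 <= F x) (F_le1 : forall x, F x <= 1)
  (F_nondecreasing : nondecreasing_fun F) (F_continuous : continuous F)
  (F_cvgy : F x @[x --> +oo] --> (1 : R)) (F_cvgNy : F x @[x --> -oo] --> (0 : R))
  (beta_gt0 : 0 < beta) (beta_le1 : beta <= 1).

Let gap z l := F (z + l) - F (z - l).

Lemma gap_nondecreasing z : nondecreasing_fun (gap z).
Proof.
move=> l l' ll'; rewrite /gap lerB// F_nondecreasing//; [exact: lerD | exact: lerB].
Qed.

Lemma gap_continuous z : continuous (gap z).
Proof.
move=> l; apply: cvgB.
  exact: (continuous_comp (cvgD (cvg_cst z) cvg_id) (F_continuous _)).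
exact: (continuous_comp (cvgB (cvg_cst z) cvg_id) (F_continuous _)).
Qed.

Lemma gap_cvgy z : gap z l @[l --> +oo] --> (1 : R).
Proof.
rewrite -[1]subr0; apply: cvgB.
  exact: cvg_comp (cvg_addrl z) F_cvgy.
apply: cvg_comp F_cvgNy; apply/cvgrNyPle => A.
by near=> l; rewrite lerBlDr -lerBlDl; near: l; apply: nbhs_pinfty_ge; rewrite num_real.
Unshelve. all: by end_near. Qed.

Lemma lambdaS_ge0 z : (0 <= lambdaS beta z F)%E.
Proof. by apply: le_ereal_inf_tmp => _ [l [l0 _] <-]; rewrite lee_fin ltW. Qed.

Lemma lambdaS_le z l : 0 < l -> beta <= gap z l -> (lambdaS beta z F <= l%:E)%E.
Proof. by move=> l0 hl; apply: ereal_inf_lbound; exists l. Qed.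

Lemma gap_lambdaS z r : lambdaS beta z F = r%:E -> gap z r = beta.
Proof.
move=> lr; have [gl gr] := (left_right_continuousP _ _).2 (gap_continuous z r).
apply/eqP; rewrite eq_le; apply/andP; split.
- have [r0|r0] := leP r 0.
    have -> : r = 0 by apply/eqP; rewrite eq_le r0 -lee_fin -lr lambdaS_ge0.
    by rewrite /gap addr0 subr0 subrr ltW.
  apply: (cvgr_to_le gl).
  near=> l; rewrite leNgt; apply/negP => bl.
  have lr' : l < r by near: l; exact: nbhs_left_lt.
  have : (lambdaS beta z F <= l%:E)%E.
    by apply: lambdaS_le (ltW bl); near: l; exact: nbhs_left_gt.
  by rewrite lr lee_fin leNgt lr'.
- apply: (cvgr_to_ge gr).
  near=> l.
  have : (lambdaS beta z F < l%:E)%E by rewrite lr lte_fin; near: l; exact: nbhs_right_gt.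
  move=> /ereal_inf_lt[_ [s [s0 bs] <-]]; rewrite lte_fin => sl.
  exact: le_trans bs (gap_nondecreasing _ _ _ (ltW sl)).
Unshelve. all: by end_near. Qed.

Lemma lambdaS_lty z : beta < 1 -> (lambdaS beta z F < +oo)%E.
Proof.
move=> b1; have [l [l0 bl]] : exists l, 0 < l /\ beta <= gap z l.
  near (pinfty_nbhs R) => l; exists l; split; near: l.
  - by apply: nbhs_pinfty_gt; rewrite num_real.
  - exact: (cvgr_ge _ (gap_cvgy z)).
by rewrite (le_lt_trans (lambdaS_le _ _ l0 bl)) ?ltry.
Unshelve. all: by end_near. Qed.

Lemma lambdaS_eqy z : lambdaS beta z F = +oo%E -> beta = 1.
Proof.
move=> lz; apply/eqP; rewrite eq_le beta_le1 leNgt; apply/negP => /(lambdaS_lty z).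
by rewrite lz ltxx.
Qed.

Lemma Fbar_ge0 x : 0 <= Fbar F x.
Proof. by case: x. Qed.

Lemma Fbar_le1 x : Fbar F x <= 1.
Proof. by case: x. Qed.

Definition Fupper z := Fbar F (z%:E + lambdaS beta z F)%E.

Lemma Fbar_lower z : Fbar F (z%:E - lambdaS beta z F)%E = Fupper z - beta.
Proof.
rewrite /Fupper; have := lambdaS_ge0 z.
case lz : (lambdaS beta z F) => [r| |] //= _.
- by have := gap_lambdaS _ _ lz; rewrite /gap; lra.
- by rewrite (lambdaS_eqy _ lz) subrr.
Qed.

Lemma LD_SE z :
  LD_S beta z F = 2 / beta ^+ 2 * (Fupper z - F z) * (F z - (Fupper z - beta)).
Proof. by rewrite /LD_S Fbar_lower. Qed.

Lemma Fupper_beta1 z : beta = 1 -> Fupper z = 1.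
Proof.
move=> b1; apply/le_anti; rewrite Fbar_le1 /=.
by have := Fbar_lower z; have := Fbar_ge0 (z%:E - lambdaS beta z F)%E; lra.
Qed.

Section beta_lt1.
Hypothesis beta_lt1 : beta < 1.

Let lam z := fine (lambdaS beta z F).

Lemma lambdaS_fineK z : (lam z)%:E = lambdaS beta z F.
Proof. by rewrite fineK// ge0_fin_numE ?lambdaS_ge0 ?lambdaS_lty. Qed.

Lemma Fupper_fine z : Fupper z = F (z + lam z).
Proof. by rewrite /Fupper -lambdaS_fineK. Qed.

Lemma Flower_fine z : F (z - lam z) = Fupper z - beta.
Proof. by rewrite -Fbar_lower -lambdaS_fineK. Qed.

Lemma Fupper_lt_shift y z : Fupper z < Fupper y ->
  0 < (y + lam y) - (z + lam z) < 2 * (y - z).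
Proof.
move=> Fzy.
have F_lt x x' : F x < F x' -> x < x'.
  by move=> Fx; rewrite ltNge; apply: contraTN Fx => /F_nondecreasing; rewrite -leNgt.
have h1 : z + lam z < y + lam y by apply: F_lt; rewrite -!Fupper_fine.
have h2 : z - lam z < y - lam y by apply: F_lt; rewrite !Flower_fine ltrD2r.
apply/andP; split; lra.
Qed.
End beta_lt1.

Lemma Fupper_continuous : continuous Fupper.
Proof.
have [b1|b1] := ltP beta 1; last first.
  have b1' : beta = 1 by apply/eqP; rewrite eq_le beta_le1.
  have -> : Fupper = cst 1 by apply/funext => z; exact: Fupper_beta1.
  move=> z; exact: cvg_cst.
move=> z; apply/cvgrPdist_lt => e e0.
have /cvgrPdist_lt/(_ e e0)/nbhs_ballP[d /= d0 hd] :=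
  F_continuous (z + fine (lambdaS beta z F)).
near=> y.
have zy : `|z - y| < d / 2.
  near: y; apply/nbhs_ballP; exists (d / 2) => /=; first lra.
  by move=> y; rewrite /ball /=.
have [Fzy|Fyz|->] := ltgtP (Fupper z) (Fupper y); last by rewrite subrr normr0.
- have /andP[? ?] := Fupper_lt_shift b1 _ _ Fzy.
  rewrite !(Fupper_fine b1); apply: hd; rewrite /ball /=.
  by move: zy; rewrite !ltr_norml => /andP[? ?]; apply/andP; split; lra.
- have /andP[? ?] := Fupper_lt_shift b1 _ _ Fyz.
  rewrite !(Fupper_fine b1); apply: hd; rewrite /ball /=.
  by move: zy; rewrite !ltr_norml => /andP[? ?]; apply/andP; split; lra.
Unshelve. all: by end_near. Qed.

Lemma LD_S_continuous : continuous (fun z => LD_S beta z F).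
Proof.
have -> : (fun z => LD_S beta z F) =
    fun z => 2 / beta ^+ 2 * (Fupper z - F z) * (F z - (Fupper z - beta)).
  by apply/funext => z; exact: LD_SE.
move=> z; apply: cvgM; first apply: cvgM; first exact: cvg_cst.
- by apply: cvgB; [exact: Fupper_continuous | exact: F_continuous].
- apply: cvgB; first exact: F_continuous.
  by apply: cvgB; [exact: Fupper_continuous | exact: cvg_cst].
Qed.
End lambdaS.

Theorem mainTheorem12 (R : realType) (d : measure_display) (T : measurableType d)
  (P : probability T R) (Z : {RV P >-> R})
  (Zac : distribution P Z `<< (@lebesgue_measure R))
  (zn : nat -> R) (z : R) (hz : zn @ \oo --> z)
  (beta : R) (hb0 : 0 < beta) (hb1 : beta <= 1) :
  (fun n => LD_S beta (zn n) (cdfR Z)) @ \oo --> LD_S beta z (cdfR Z).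
Proof.
have LD_cont := LD_S_continuous (cdfR Z) beta (cdfR_ge0 Z) (cdfR_le1 Z)
  (cdfR_nondecreasing Z) (cdfR_continuous Z Zac) (cvg_cdfR_y1 Z) (cvg_cdfR_Ny0 Z)
  hb0 hb1.
exact: cvg_comp _ _ hz (LD_cont z).
Qed.
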